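(* Let $f$ be a probability density on $\mathcal{X}$ (with respect to a $\sigma$-finite measure $\lambda$), let $q(\cdot\mid x)$ be a proposal density, and let $(X_n)_{n\ge 0}$ be the Metropolis–Hastings Markov chain with target density $f$, proposal $q$, and initial density $p^0$; denote by $p^n$ the density of $X_n$. Assume there is $\delta\in(0,1)$ such that $q(y\mid x)\ge \delta f(y)$ for all $x,y\in\mathcal{X}$, and that $r:=\left\| \frac{p^0}{f}-1\right\|_\infty$ satisfies $0<r<\infty$. Put $\nu=1-\delta$. Then for every $\alpha\in(1,+\infty)$ and every $n\ge 0$: \[ D_{\alpha}(p^n,f)\le\frac{1}{\alpha(1-\alpha)}\bigl(1-(r\nu^n + 1)^\alpha\bigr),\qquad R_\alpha(p^n,f)\le \frac{\alpha}{\alpha -1}\,r\nu^n,\qquad T_\alpha(p^n,f)\le\frac{1}{\alpha-1}\bigl((r\nu^n +1)^\alpha -1\bigr). \] In particular all three divergences tend to $0$ as $n\to\infty$.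
   Context: For probability densities $p_1,p_2$ on $\mathcal{X}$ with respect to $\lambda$ and $\alpha>0$, $\alpha\ne 1$, write $M_\alpha(p_1,p_2)=\int_{\mathcal{X}} p_1^\alpha(x)\,p_2^{1-\alpha}(x)\,\lambda(\mathrm{d}x)$. The $\alpha$-divergence is $D_\alpha(p_1,p_2)=\frac{1}{\alpha(1-\alpha)}\bigl(1-M_\alpha(p_1,p_2)\bigr)$; the Rényi $\alpha$-divergence is $R_\alpha(p_1,p_2)=\frac{1}{\alpha-1}\log M_\alpha(p_1,p_2)$; the Tsallis $\alpha$-divergence is $T_\alpha(p_1,p_2)=\frac{1}{\alpha-1}\bigl(M_\alpha(p_1,p_2)-1\bigr)$. The Metropolis–Hastings chain: given $X_{n}=x$, draw $Y\sim q(\cdot\mid x)$ and set $X_{n+1}=Y$ with probability $\min\bigl(1,\frac{f(Y)q(x\mid Y)}{f(x)q(Y\mid x)}\bigr)$, otherwise $X_{n+1}=x$. The sup norm $\|\cdot\|_\infty$ is taken over $\mathcal{X}$. *)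

From HB Require Import structures.
From mathcomp Require Import all_boot all_order all_algebra.
From mathcomp Require Import all_classical all_reals all_analysis.
Set Implicit Arguments. Unset Strict Implicit. Unset Printing Implicit Defensive.
Import Order.TTheory GRing.Theory Num.Theory.
Local Open Scope classical_set_scope.
Local Open Scope ring_scope.

Section Div.
Context {d : measure_display} {X : measurableType d} {R : realType}.
Variable lam : {measure set X -> \bar R}.

Definition Malpha (a : R) (p1 p2 : X -> R) : \bar R :=
  (\int[lam]_x ((p1 x `^ a) * (p2 x `^ (1 - a)))%:E)%E.

Definition Dalpha (a : R) (p1 p2 : X -> R) : \bar R :=
  ((1 - Malpha a p1 p2) * (1 / (a * (1 - a)))%:E)%E.

Definition Ralpha (a : R) (p1 p2 : X -> R) : \bar R :=
  (lne (Malpha a p1 p2) * (1 / (a - 1))%:E)%E.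

Definition Talpha (a : R) (p1 p2 : X -> R) : \bar R :=
  ((Malpha a p1 p2 - 1) * (1 / (a - 1))%:E)%E.

Definition is_density (p : X -> R) : Prop :=
  measurable_fun setT p /\ (forall x, 0 <= p x) /\
  (\int[lam]_x (p x)%:E = 1)%E.

(* Metropolis-Hastings acceptance probability; q x y = q(y | x).
   Convention: acceptance 1 when f(x) q(y|x) = 0. *)
Definition mh_acc (f : X -> R) (q : X -> X -> R) (x y : X) : R :=
  if f x * q x y == 0 then 1
  else Num.min 1 ((f y * q y x) / (f x * q x y)).

(* density of X_n for the MH chain started from density p0:
   p^{n+1}(y) = int p^n(x) acc(x,y) q(y|x) dx
               + p^n(y) (1 - int acc(y,z) q(z|y) dz) *)
Fixpoint mh_density (f : X -> R) (q : X -> X -> R) (p0 : X -> R) (n : nat)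
  : X -> R :=
  match n with
  | 0%N => p0
  | n'.+1 => let pn := mh_density f q p0 n' in
     fun y => Rintegral lam setT (fun x => pn x * mh_acc f q x y * q x y)
            + pn y * (1 - Rintegral lam setT (fun z => mh_acc f q y z * q y z))
  end.

(* |p0/f - 1| pointwise, in extended reals (+oo where f = 0 < p0;
   0 where f = p0 = 0) *)
Definition ratio_dev (p0 f : X -> R) (x : X) : \bar R :=
  if f x != 0 then (`| p0 x / f x - 1 |)%:E
  else if p0 x == 0 then 0%E else +oo%E.

Definition sup_ratio_dev (p0 f : X -> R) : \bar R :=
  ereal_sup (range (ratio_dev p0 f)).

End Div.

From HB Require Import structures.
From mathcomp Require Import all_boot all_order all_algebra.
From mathcomp Require Import all_classical all_reals all_analysis.
From mathcomp Require Import measurable_realfun ring lra.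
Set Implicit Arguments. Unset Strict Implicit. Unset Printing Implicit Defensive.
Import Order.TTheory GRing.Theory Num.Theory.
Import numFieldNormedType.Exports.
Local Open Scope classical_set_scope.
Local Open Scope ring_scope.

(* The Metropolis-Hastings step is
     p'(y) = \int p(x) K(x,y) dx + p(y) (1 - \int K(y,z) dz),  K(x,y) = acc(x,y) q(y|x),
   with K reversible with respect to f and K(x,y) >= delta f(y).  Writing
   K(x,y) = (K(x,y) - delta f(y)) + delta f(y), the second part contributes delta f(y)
   whatever p is, while reversibility makes f stationary; hence a relative deviation
   |p - f| <= c f shrinks to |p' - f| <= c (1 - delta) f, and |p^n - f| <= r nu^n f.
   Pointwise, (p^n)^a f^(1-a) then lies between (1 - r nu^n)^a f and (1 + r nu^n)^a f,
   so M_a(p^n, f) lies between (1 - r nu^n)^a and (1 + r nu^n)^a: the upper bound gives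
   the three estimates, and both bounds tend to 1, which gives the limits. *)

Lemma powR_mulpowR1B_le (R : realType) (a k u v : R) : 0 < a -> 0 <= v ->
  0 <= u <= k * v -> u `^ a * v `^ (1 - a) <= k `^ a * v.
Proof.
move=> a_gt0 v0 /andP[u0 ukv]; have [v_eq0|v_neq0] := eqVneq v 0.
  have u_eq0 : u = 0 by apply/eqP; rewrite eq_le u0 -(mulr0 k) -v_eq0 ukv.
  by rewrite v_eq0 u_eq0 powR0 ?gt_eqF // mul0r mulr0.
have v_gt0 : 0 < v by rewrite lt0r v_neq0.
have k0 : 0 <= k by rewrite -(pmulr_lge0 _ v_gt0) (le_trans u0).
have vE : v = v `^ a * v `^ (1 - a).
  by rewrite -powRD ?(gt_eqF v_gt0) ?implybT // addrC subrK powRr1 // ltW.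
rewrite [in leRHS]vE mulrA -powRM ?(ltW v_gt0) // ler_pM2r ?powR_gt0 //.
by rewrite ge0_ler_powR ?nnegrE ?(ltW a_gt0) ?mulr_ge0 ?(ltW v_gt0).
Qed.

Lemma powR_mulpowR1B_ge (R : realType) (a k u v : R) : 0 < a -> 0 <= v -> 0 <= k ->
  k * v <= u -> k `^ a * v <= u `^ a * v `^ (1 - a).
Proof.
move=> a_gt0 v0 k0 kvu; have [v_eq0|v_neq0] := eqVneq v 0.
  by rewrite v_eq0 mulr0 mulr_ge0 ?powR_ge0.
have v_gt0 : 0 < v by rewrite lt0r v_neq0.
have vE : v = v `^ a * v `^ (1 - a).
  by rewrite -powRD ?(gt_eqF v_gt0) ?implybT // addrC subrK powRr1 // ltW.
rewrite [in leLHS]vE mulrA -powRM ?(ltW v_gt0) // ler_pM2r ?powR_gt0 //.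
have kv_ge0 : 0 <= k * v by rewrite mulr_ge0 ?(ltW v_gt0).
by rewrite ge0_ler_powR ?nnegrE ?(ltW a_gt0) // (le_trans kv_ge0 kvu).
Qed.

Lemma cvg_powR_sandwich (R : realType) (a : R) (c m : R ^nat) :
  c n @[n --> \oo] --> (0 : R) ->
  (\forall n \near \oo, (1 - c n) `^ a <= m n <= (1 + c n) `^ a) ->
  m n @[n --> \oo] --> (1 : R).
Proof.
move=> c0 hm.
have cvg_ln1 (s : R) : a * ln (1 + s * c n) @[n --> \oo] --> (0 : R).
  rewrite -(mulr0 a) -ln1; apply: cvgMl_tmp.
  have h1 : 1 + s * c n @[n --> \oo] --> 1 + s * 0.
    by apply: cvgD; [exact: cvg_cst | exact: cvgMl_tmp].
  rewrite mulr0 addr0 in h1.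
  exact: (continuous_cvg _ (continuous_ln ltr01) h1).
have ln_m : ln (m n) @[n --> \oo] --> (0 : R).
  apply: (squeeze_cvgr _ (cvg_ln1 (-1)) (cvg_ln1 1)).
  near=> n.
  have c_lt1 : c n < 1 by near: n; exact: cvgr_lt c0 _ ltr01.
  have c_gtN1 : -1 < c n by near: n; apply: cvgr_gt c0 _ _; rewrite ltrN10.
  have /andP[mlo mhi] : (1 - c n) `^ a <= m n <= (1 + c n) `^ a by near: n.
  have m0 : 0 < m n by rewrite (lt_le_trans _ mlo) // powR_gt0 // subr_gt0.
  rewrite mulN1r mul1r; apply/andP; split;
    rewrite -ln_powR ler_ln ?posrE ?powR_gt0 ?subr_gt0 //; lra.
have : expR (ln (m n)) @[n --> \oo] --> (1 : R).
  rewrite -expR0; exact: (cvg_comp _ _ ln_m (@continuous_expR _ 0)).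
apply: cvg_trans; apply: near_eq_cvg; near=> n.
have c_lt1 : c n < 1 by near: n; exact: cvgr_lt c0 _ ltr01.
have /andP[mlo _] : (1 - c n) `^ a <= m n <= (1 + c n) `^ a by near: n.
by rewrite lnK // posrE (lt_le_trans _ mlo) // powR_gt0 // subr_gt0.
Unshelve. all: by end_near.
Qed.

Section DivergenceBounds.
Context {d : measure_display} {X : measurableType d} {R : realType}.
Variables (lam : {measure set X -> \bar R}) (a : R) (p1 p2 : X -> R).

Lemma Dalpha_le m c : 1 < a -> Malpha lam a p1 p2 = m%:E -> m <= (c + 1) `^ a ->
  (Dalpha lam a p1 p2 <= (1 / (a * (1 - a)) * (1 - (c + 1) `^ a))%:E)%E.
Proof.
move=> a_gt1 hM mU; rewrite /Dalpha hM -EFinB -EFinM lee_fin.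
have : 1 / (a * (1 - a)) < 0 by rewrite div1r invr_lt0; nra.
nra.
Qed.

Lemma Ralpha_le m c : 1 < a -> 0 <= c -> Malpha lam a p1 p2 = m%:E -> m <= (c + 1) `^ a ->
  (Ralpha lam a p1 p2 <= (a / (a - 1) * c)%:E)%E.
Proof.
move=> a_gt1 c0 hM mU; rewrite /Ralpha hM.
have [m_le0|m_gt0] := leP m 0.
  by rewrite le0_lneNy // gt0_mulNye ?lte_fin ?divr_gt0 ?subr_gt0 // leNye.
rewrite lne_EFin // -EFinM lee_fin.
have ln_m : ln m <= a * c.
  apply: (le_trans (y := ln ((c + 1) `^ a))).
    by rewrite ler_ln ?posrE ?powR_gt0 //; lra.
  have ln_c1 : ln (1 + c) <= c by apply: le_ln1Dx; lra.
  rewrite ln_powR addrC ler_wpM2l //; lra.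
rewrite (_ : a / (a - 1) * c = a * c * (1 / (a - 1))); last by field; lra.
by rewrite ler_wpM2r // divr_ge0 //; lra.
Qed.

Lemma Talpha_le m c : 1 < a -> Malpha lam a p1 p2 = m%:E -> m <= (c + 1) `^ a ->
  (Talpha lam a p1 p2 <= (1 / (a - 1) * ((c + 1) `^ a - 1))%:E)%E.
Proof.
move=> a_gt1 hM mU; rewrite /Talpha hM -EFinB -EFinM lee_fin.
have : 0 < 1 / (a - 1) by rewrite divr_gt0 //; lra.
nra.
Qed.

End DivergenceBounds.

Section DivergenceLimits.
Context {d : measure_display} {X : measurableType d} {R : realType}.
Variables (lam : {measure set X -> \bar R}) (a : R) (p : nat -> X -> R) (f : X -> R).
Variable m : R ^nat.
Hypotheses (Malpha_m : forall n, Malpha lam a (p n) f = (m n)%:E)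
  (m_cvg1 : m n @[n --> \oo] --> (1 : R)).

Lemma Dalpha_cvg0 : Dalpha lam a (p n) f @[n --> \oo] --> 0%E.
Proof.
have -> : (fun n => Dalpha lam a (p n) f) =
    (fun n => ((1 - m n) * (1 / (a * (1 - a))))%:E).
  by apply/funext => n; rewrite /Dalpha Malpha_m -EFinB -EFinM.
apply: cvg_EFin; first by near=> n.
rewrite -(mul0r (1 / (a * (1 - a)))) -(subrr (1 : R)).
by apply: cvgMr_tmp; apply: cvgB => //; exact: cvg_cst.
Unshelve. all: by end_near.
Qed.

Lemma Talpha_cvg0 : Talpha lam a (p n) f @[n --> \oo] --> 0%E.
Proof.
have -> : (fun n => Talpha lam a (p n) f) =
    (fun n => ((m n - 1) * (1 / (a - 1)))%:E).
  by apply/funext => n; rewrite /Talpha Malpha_m -EFinB -EFinM.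
apply: cvg_EFin; first by near=> n.
rewrite -(mul0r (1 / (a - 1))) -(subrr (1 : R)).
by apply: cvgMr_tmp; apply: cvgB => //; exact: cvg_cst.
Unshelve. all: by end_near.
Qed.

Lemma Ralpha_cvg0 : Ralpha lam a (p n) f @[n --> \oo] --> 0%E.
Proof.
have ln_m : ln (m n) @[n --> \oo] --> (0 : R).
  by rewrite -ln1; exact: (continuous_cvg _ (continuous_ln ltr01) m_cvg1).
have : (ln (m n) * (1 / (a - 1)))%:E @[n --> \oo] --> 0%E.
  apply: cvg_EFin; first by near=> n.
  by rewrite -(mul0r (1 / (a - 1))); exact: cvgMr_tmp.
apply: cvg_trans; apply: near_eq_cvg; near=> n.
have m_gt0 : 0 < m n by near: n; exact: cvgr_gt m_cvg1 _ ltr01.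
by rewrite /Ralpha Malpha_m lne_EFin // -EFinM.
Unshelve. all: by end_near.
Qed.

End DivergenceLimits.

Section RealIntegrable.
Context {d : measure_display} {X : measurableType d} {R : realType}.
Variable lam : {measure set X -> \bar R}.

Lemma integrable_le_real (g h : X -> R) : measurable_fun setT g ->
  lam.-integrable setT (EFin \o h) -> (forall x, `|g x| <= h x) ->
  lam.-integrable setT (EFin \o g).
Proof.
move=> mg ih gh; apply: le_integrable ih => //; first exact/measurable_EFinP.
by move=> x _; rewrite /comp !abse_EFin lee_fin (le_trans (gh x)) // ler_norm.
Qed.

Lemma integrableZl_real (k : R) (g : X -> R) : lam.-integrable setT (EFin \o g) ->
  lam.-integrable setT (EFin \o (fun x => k * g x)).
Proof.
by move=> ig; apply: eq_integrable (integrableZl _ k ig) => // x _; rewrite /comp EFinM.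
Qed.

Lemma density_integrable (g : X -> R) : is_density lam g ->
  lam.-integrable setT (EFin \o g).
Proof.
case=> mg [g0 ig]; apply/integrableP; split; first exact/measurable_EFinP.
under eq_integral do rewrite gee0_abs ?lee_fin ?g0 //.
by rewrite ig ltry.
Qed.

Lemma density_Rintegral (g : X -> R) : is_density lam g -> \int[lam]_x g x = 1.
Proof. by case=> _ [_ ig]; rewrite /Rintegral ig. Qed.

End RealIntegrable.

Section RelativeDeviation.
Context {d : measure_display} {X : measurableType d} {R : realType}.
Variables (lam : {measure set X -> \bar R}) (f : X -> R).
Hypothesis f_density : is_density lam f.

(* [rel_dev_le p c] is the pointwise form of [|| p / f - 1 ||_oo <= c]. *)
Definition rel_dev_le (p : X -> R) (c : R) := forall x, `|p x - f x| <= c * f x.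

Lemma density_ge0 x : 0 <= f x. Proof. by case: f_density => _ []. Qed.

Lemma measurable_density : measurable_fun setT f. Proof. by case: f_density. Qed.

Lemma rel_dev_le_bounds p c x : rel_dev_le p c -> (1 - c) * f x <= p x <= (1 + c) * f x.
Proof. by move=> /(_ x); rewrite ler_norml => /andP[lo hi]; apply/andP; split; lra. Qed.

Lemma rel_dev_le_norm p c x : rel_dev_le p c -> `|p x| <= (1 + c) * f x.
Proof.
move=> /(rel_dev_le_bounds x) /andP[lo hi]; have fx0 := density_ge0 x.
by rewrite ler_norml; apply/andP; split; nra.
Qed.

Lemma rel_dev_le_integrable p c : measurable_fun setT p -> rel_dev_le p c ->
  lam.-integrable setT (EFin \o p).
Proof.
move=> mp pc; apply: integrable_le_real mp _ (fun x => rel_dev_le_norm x pc).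
exact/integrableZl_real/density_integrable.
Qed.

Lemma rel_dev_le_sup_ratio_dev p r : sup_ratio_dev p f = r%:E -> rel_dev_le p r.
Proof.
move=> supE x; have : (ratio_dev p f x <= r%:E)%E.
  by rewrite -supE; apply: ereal_sup_ubound; exists x.
rewrite /ratio_dev; have [fx0|fx_neq0] := eqVneq (f x) 0 => /=.
  by case: eqP => [->|_]; rewrite ?leye_eq // fx0 subrr normr0 mulr0.
rewrite lee_fin => h.
rewrite (_ : p x - f x = (p x / f x - 1) * f x); last by field.
by rewrite normrM (ger0_norm (density_ge0 x)) ler_wpM2r ?density_ge0.
Qed.

Section Malpha.
Variables (a c : R) (p : X -> R).
Hypotheses (a_gt0 : 0 < a) (p_density : is_density lam p) (pc : rel_dev_le p c).

Let p_ge0 x : 0 <= p x. Proof. by case: p_density => _ []. Qed.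

Let mp : measurable_fun setT p. Proof. by case: p_density. Qed.

Let measurable_integrand :
  measurable_fun setT (fun x => p x `^ a * f x `^ (1 - a)).
Proof.
apply: measurable_funM; first exact: measurableT_comp (measurable_powR a) mp.
exact: measurableT_comp (measurable_powR (1 - a)) measurable_density.
Qed.

Let integral_scaled_density (k : R) : (\int[lam]_x (k * f x)%:E = k%:E)%E.
Proof.
under eq_integral do rewrite EFinM.
by rewrite integralZl ?density_integrable //; case: f_density => _ [_ ->]; rewrite mule1.
Qed.

Lemma Malpha_le : (Malpha lam a p f <= ((1 + c) `^ a)%:E)%E.
Proof.
rewrite /Malpha -integral_scaled_density; apply: ge0_le_integral => //.
- by move=> x _; rewrite lee_fin mulr_ge0 ?powR_ge0.
- by apply/measurable_EFinP; exact: measurable_integrand.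
- by apply/measurable_EFinP/measurable_funM => //; exact: measurable_density.
- move=> x _; rewrite lee_fin; apply: powR_mulpowR1B_le; rewrite ?density_ge0 ?p_ge0 //=.
  by have /andP[] := rel_dev_le_bounds x pc.
Qed.

Lemma Malpha_ge : c <= 1 -> (((1 - c) `^ a)%:E <= Malpha lam a p f)%E.
Proof.
move=> c1; rewrite /Malpha -integral_scaled_density; apply: ge0_le_integral => //.
- by move=> x _; rewrite lee_fin mulr_ge0 ?powR_ge0 ?density_ge0.
- by apply/measurable_EFinP/measurable_funM => //; exact: measurable_density.
- by apply/measurable_EFinP; exact: measurable_integrand.
- move=> x _; rewrite lee_fin; apply: powR_mulpowR1B_ge; rewrite ?density_ge0 ?subr_ge0 //.
  by have /andP[] := rel_dev_le_bounds x pc.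
Qed.

Lemma Malpha_fin_num : Malpha lam a p f \is a fin_num.
Proof.
have M_ge0 : (0 <= Malpha lam a p f)%E.
  by apply: integral_ge0 => x _; rewrite lee_fin mulr_ge0 ?powR_ge0.
by rewrite ge0_fin_numE //; exact: le_lt_trans Malpha_le (ltry _).
Qed.

Lemma fine_Malpha_le : fine (Malpha lam a p f) <= (1 + c) `^ a.
Proof. by rewrite -lee_fin fineK ?Malpha_fin_num // Malpha_le. Qed.

Lemma fine_Malpha_ge : c <= 1 -> (1 - c) `^ a <= fine (Malpha lam a p f).
Proof. by move=> c1; rewrite -lee_fin fineK ?Malpha_fin_num // Malpha_ge. Qed.

End Malpha.

End RelativeDeviation.

Section SigmaFiniteFubini.
Context {d : measure_display} {X : measurableType d} {R : realType}.
Variables (lam : {measure set X -> \bar R}) (lam_sigma : sigma_finite setT lam).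

(* The library states Fubini-Tonelli for the structure of sigma-finite measures;
   [lam_sigma] equips an alias of [lam] with it. *)
Definition sigma_finite_alias : set X -> \bar R := lam.
HB.instance Definition _ := Measure.on sigma_finite_alias.
HB.instance Definition _ :=
  Measure_isSigmaFinite.Build _ _ _ sigma_finite_alias lam_sigma.

Variable F : X * X -> \bar R.
Hypotheses (mF : measurable_fun setT F) (F_ge0 : forall z, (0 <= F z)%E).

Lemma fubini_tonelli_sigma_finite :
  (\int[lam]_x \int[lam]_y F (x, y) = \int[lam]_y \int[lam]_x F (x, y))%E.
Proof.
exact: (@fubini_tonelli _ _ _ _ _ sigma_finite_alias sigma_finite_alias F mF F_ge0).
Qed.

Lemma measurable_fun_integral_snd :
  measurable_fun setT (fun x => \int[lam]_y F (x, y))%E.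
Proof.
exact: (@measurable_fun_fubini_tonelli_F _ _ _ _ _ sigma_finite_alias F mF F_ge0).
Qed.

Lemma measurable_fun_integral_fst :
  measurable_fun setT (fun y => \int[lam]_x F (x, y))%E.
Proof.
exact: (@measurable_fun_fubini_tonelli_G _ _ _ _ _ sigma_finite_alias F mF F_ge0).
Qed.

End SigmaFiniteFubini.

Section ReversibleKernel.
Context {d : measure_display} {X : measurableType d} {R : realType}.
Variables (lam : {measure set X -> \bar R}) (f : X -> R) (K : X -> X -> R) (delta : R).
Hypotheses (lam_sigma : sigma_finite setT lam) (f_density : is_density lam f)
  (mK : measurable_fun setT (fun z : X * X => K z.1 z.2))
  (K_ge0 : forall x y, 0 <= K x y)
  (K_integrable : forall x, lam.-integrable setT (EFin \o K x))
  (K_mass_le1 : forall x, \int[lam]_y K x y <= 1)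
  (K_reversible : forall x y, f x * K x y = f y * K y x)
  (K_minorized : forall x y, delta * f y <= K x y) (delta_ge0 : 0 <= delta).

Definition kernel_step (p : X -> R) (y : X) : R :=
  \int[lam]_x (p x * K x y) + p y * (1 - \int[lam]_z K y z).

Lemma measurable_K2 y : measurable_fun setT (fun x => K x y).
Proof. exact: measurableT_comp mK (pair2_measurable y). Qed.

Lemma integrable_density_K y : lam.-integrable setT (EFin \o (fun x => f x * K x y)).
Proof.
apply: eq_integrable (integrableZl_real (f y) (K_integrable y)) => // x _.
by rewrite /comp K_reversible.
Qed.

Lemma integral_density_K y : \int[lam]_x (f x * K x y) = f y * \int[lam]_x K y x.
Proof.
rewrite -RintegralZl //; apply: eq_Rintegral => x _; exact: K_reversible.
Qed.

Lemma integrable_le_density_K (g : X -> R) k y : measurable_fun setT g ->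
  (forall x, `|g x| <= k * (f x * K x y)) -> lam.-integrable setT (EFin \o g).
Proof.
move=> mg gK; apply: (integrable_le_real (h := fun x => k * (f y * K y x))) => //.
- exact/integrableZl_real/integrableZl_real/K_integrable.
- by move=> x; rewrite -K_reversible.
Qed.

Lemma integrable_mul_K (g : X -> R) k y : measurable_fun setT g ->
  (forall x, `|g x| <= k * f x) -> lam.-integrable setT (EFin \o (fun x => g x * K x y)).
Proof.
move=> mg gf; apply: (integrable_le_density_K (k := k) (y := y)).
  exact: measurable_funM mg (measurable_K2 y).
by move=> x; rewrite mulrA normrM (ger0_norm (K_ge0 x y)) ler_wpM2r.
Qed.

Lemma integrable_mul_Kminor (g : X -> R) k y : measurable_fun setT g ->
  (forall x, `|g x| <= k * f x) ->
  lam.-integrable setT (EFin \o (fun x => g x * (K x y - delta * f y))).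
Proof.
move=> mg gf; apply: (integrable_le_density_K (k := k) (y := y)).
  by apply: measurable_funM mg (measurable_funB (measurable_K2 y) (measurable_cst _)).
move=> x; have G_ge0 : 0 <= K x y - delta * f y by rewrite subr_ge0.
rewrite mulrA normrM (ger0_norm G_ge0); apply: le_trans (ler_wpM2r G_ge0 (gf x)) _.
apply: ler_wpM2l; first exact: le_trans (normr_ge0 (g x)) (gf x).
by rewrite gerDl oppr_le0 mulr_ge0 ?(density_ge0 f_density).
Qed.

Lemma kernel_step_rel_dev p c : measurable_fun setT p -> rel_dev_le f p c ->
  \int[lam]_x p x = 1 -> rel_dev_le f (kernel_step p) (c * (1 - delta)).
Proof.
move=> mp pc p1 y.
pose A := \int[lam]_z K y z.
pose G x := K x y - delta * f y.
have G_ge0 x : 0 <= G x by rewrite subr_ge0.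
have fG_int : lam.-integrable setT (EFin \o (fun x => f x * G x)).
  apply: (integrable_mul_Kminor (k := 1)) (measurable_density f_density) _ => x.
  by rewrite mul1r ger0_norm ?(density_ge0 f_density).
have pG_int : lam.-integrable setT (EFin \o (fun x => p x * G x)).
  exact: integrable_mul_Kminor mp (fun x => rel_dev_le_norm f_density x pc).
have p_int := rel_dev_le_integrable f_density mp pc.
have pK_split : \int[lam]_x (p x * K x y) = \int[lam]_x (p x * G x) + delta * f y.
  transitivity (\int[lam]_x (p x * G x + delta * f y * p x)).
    by apply: eq_Rintegral => x _; rewrite /G; ring.
  by rewrite RintegralD ?RintegralZl ?p1 ?mulr1 //; exact: integrableZl_real.
have fG_eq : \int[lam]_x (f x * G x) = f y * A - delta * f y.
  transitivity (\int[lam]_x (f x * K x y - delta * f y * f x)).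
    by apply: eq_Rintegral => x _; rewrite /G; ring.
  rewrite RintegralB ?integral_density_K ?RintegralZl ?(density_Rintegral f_density) ?mulr1 //.
  - exact: density_integrable.
  - exact: integrable_density_K.
  - exact/integrableZl_real/density_integrable.
have pG_le : \int[lam]_x (p x * G x) <= (1 + c) * \int[lam]_x (f x * G x).
  rewrite -RintegralZl //; apply: le_Rintegral => //; first exact: integrableZl_real.
  move=> x _; rewrite mulrA ler_wpM2r //.
  by have /andP[] := rel_dev_le_bounds x pc.
have pG_ge : (1 - c) * \int[lam]_x (f x * G x) <= \int[lam]_x (p x * G x).
  rewrite -RintegralZl //; apply: le_Rintegral => //; first exact: integrableZl_real.
  move=> x _; rewrite mulrA ler_wpM2r //.
  by have /andP[] := rel_dev_le_bounds x pc.
(* Now kernel_step p y - f y = \int (p - f) G + (p y - f y) (1 - A), each term being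
   bounded by c times the corresponding term of f y = \int f G + delta f y + f y (1 - A). *)
have /andP[py_ge py_le] := rel_dev_le_bounds y pc.
have A_le1 : A <= 1 := K_mass_le1 y.
rewrite /kernel_step -/A pK_split; move: pG_le pG_ge; rewrite fG_eq.
rewrite ler_norml => pG_le pG_ge; apply/andP; split; nra.
Qed.

Lemma measurable_Kmass : measurable_fun setT (fun y => \int[lam]_z K y z).
Proof.
have mF : measurable_fun setT (fun z : X * X => (K z.1 z.2)%:E) by exact/measurable_EFinP.
have := measurable_fun_integral_snd lam_sigma mF (fun z => K_ge0 z.1 z.2).
by move/(measurableT_comp (fine_measurable measurableT)).
Qed.

Section Step.
Variables (p : X -> R) (c : R).
Hypotheses (mp : measurable_fun setT p) (p_ge0 : forall x, 0 <= p x)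
  (pc : rel_dev_le f p c) (p1 : \int[lam]_x p x = 1).

Let pK z := (p z.1 * K z.1 z.2)%:E.

Let measurable_pK : measurable_fun setT pK.
Proof.
apply/measurable_EFinP/measurable_funM => //.
exact: measurableT_comp mp measurable_fst.
Qed.

Let pK_ge0 z : (0 <= pK z)%E. Proof. by rewrite lee_fin mulr_ge0. Qed.

Lemma measurable_integral_K : measurable_fun setT (fun y => \int[lam]_x (p x * K x y)).
Proof.
have := measurable_fun_integral_fst lam_sigma measurable_pK pK_ge0.
by move/(measurableT_comp (fine_measurable measurableT)).
Qed.

Lemma kernel_step_ge0 y : 0 <= kernel_step p y.
Proof.
apply: addr_ge0; first by apply: Rintegral_ge0 => x _; rewrite mulr_ge0.
by rewrite mulr_ge0 // subr_ge0.
Qed.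

Let integrable_p_Kmass :
  lam.-integrable setT (EFin \o (fun y => p y * \int[lam]_z K y z)).
Proof.
apply: integrable_le_real (rel_dev_le_integrable f_density mp pc) _ => [|y].
  exact: measurable_funM measurable_Kmass.
have A_ge0 : 0 <= \int[lam]_z K y z by rewrite Rintegral_ge0.
by rewrite normrM !ger0_norm // ler_piMr //; exact: K_mass_le1.
Qed.

Lemma integral_integral_K : (\int[lam]_y (\int[lam]_x (p x * K x y))%:E =
  (\int[lam]_y (p y * \int[lam]_z K y z))%:E)%E.
Proof.
have pK_fin y : (\int[lam]_x pK (x, y) = (\int[lam]_x (p x * K x y))%:E)%E.
  have pK_int := integrable_mul_K y mp (fun x => rel_dev_le_norm f_density x pc).
  by rewrite /Rintegral fineK //; exact: integrable_fin_num pK_int.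
under eq_integral do rewrite -pK_fin.
rewrite -fubini_tonelli_sigma_finite //.
transitivity (\int[lam]_x (p x * \int[lam]_z K x z)%:E)%E; last first.
  by rewrite /Rintegral fineK //; exact: integrable_fin_num integrable_p_Kmass.
apply: eq_integral => x _; rewrite /pK /=.
under eq_integral do rewrite EFinM.
rewrite integralZl //; last exact: K_integrable.
by rewrite EFinM /Rintegral fineK //; exact: integrable_fin_num (K_integrable x).
Qed.

Lemma integrable_integral_K :
  lam.-integrable setT (EFin \o (fun y => \int[lam]_x (p x * K x y))).
Proof.
apply/integrableP; split; first exact/measurable_EFinP/measurable_integral_K.
rewrite (eq_integral (fun y => (\int[lam]_x (p x * K x y))%:E)).
  by rewrite integral_integral_K ltry.
move=> y _; rewrite /comp gee0_abs // lee_fin.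
by apply: Rintegral_ge0 => x _; rewrite mulr_ge0.
Qed.

Lemma integral_kernel_step : \int[lam]_y kernel_step p y = 1.
Proof.
pose A y := \int[lam]_z K y z.
pose T1 y := \int[lam]_x (p x * K x y).
have T1_int : lam.-integrable setT (EFin \o T1) := integrable_integral_K.
have T1_eq : \int[lam]_y T1 y = \int[lam]_y (p y * A y).
  by rewrite {1}/Rintegral /T1 integral_integral_K.
have p_int := rel_dev_le_integrable f_density mp pc.
have pA_int := integrable_p_Kmass.
have pB_int : lam.-integrable setT (EFin \o (fun y => p y - p y * A y)).
  apply: integrable_le_real p_int _ => [|y].
    by apply: measurable_funB => //; exact: measurable_funM measurable_Kmass.
  have A_le1 : A y <= 1 := K_mass_le1 y.
  have A_ge0 : 0 <= A y by rewrite Rintegral_ge0.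
  rewrite (_ : p y - p y * A y = p y * (1 - A y)); last by ring.
  by rewrite normrM !ger0_norm ?subr_ge0 // ler_piMr // lerBlDr lerDl.
transitivity (\int[lam]_y (T1 y + (p y - p y * A y))).
  by apply: eq_Rintegral => y _; rewrite /kernel_step mulrBr mulr1.
by rewrite RintegralD // RintegralB // T1_eq p1 addrC subrK.
Qed.

End Step.

Lemma kernel_step_density p c : is_density lam p -> rel_dev_le f p c ->
  is_density lam (kernel_step p) /\ rel_dev_le f (kernel_step p) (c * (1 - delta)).
Proof.
case=> mp [p_ge0 p1E] pc.
have p1 : \int[lam]_x p x = 1 by rewrite /Rintegral p1E.
have mT : measurable_fun setT (kernel_step p).
  apply: measurable_funD; first exact: measurable_integral_K mp p_ge0.
  by apply: measurable_funM => //; apply: measurable_funB => //; exact: measurable_Kmass.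
have Tc := kernel_step_rel_dev mp pc p1.
split=> //; split=> //; split; first exact: kernel_step_ge0.
rewrite -(integral_kernel_step mp p_ge0 pc p1) /Rintegral fineK //.
exact: integrable_fin_num (rel_dev_le_integrable f_density mT Tc).
Qed.

End ReversibleKernel.

Lemma mulr_min1_div (R : realFieldType) (u v : R) : 0 < u ->
  u * Num.min 1 (v / u) = Num.min u v.
Proof. by move=> u_gt0; rewrite minr_pMr ?ltW // mulr1 mulrC divfK ?gt_eqF. Qed.

Lemma measurable_inv (R : realType) : measurable_fun [set: R] (@GRing.inv R).
Proof.
have -> : (@GRing.inv R) = (fun t => if t == 0 then 0 else t^-1).
  by apply/funext => t; case: eqP => // ->; rewrite invr0.
apply: measurable_fun_if => //.
- apply: (@measurable_fun_eqr _ R R setT id (cst 0)); first exact: measurable_id.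
  exact: measurable_cst.
- have -> : [set: R] `&` (fun t : R => t == 0) @^-1` [set false] = ~` [set 0].
    apply/seteqP; split => t /=; first by move=> [_ /negbT/eqP].
    by move=> /eqP/negbTE.
  have closed0 : closed [set (0 : R)].
    exact/accessible_closed_set1/hausdorff_accessible/norm_hausdorff.
  apply: open_continuous_measurable_fun; first exact/closed_openC.
  by move=> t; rewrite inE => /eqP t0; apply: inv_continuous.
Qed.

Section MetropolisHastings.
Context {d : measure_display} {X : measurableType d} {R : realType}.
Variables (lam : {measure set X -> \bar R}) (f : X -> R) (q : X -> X -> R) (delta : R).
Hypotheses (f_density : is_density lam f) (q_density : forall x, is_density lam (q x))
  (mq : measurable_fun setT (fun xy : X * X => q xy.1 xy.2))
  (q_minorized : forall x y, delta * f y <= q x y).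

Definition mh_kernel (x y : X) : R := mh_acc f q x y * q x y.

Let f_ge0 := density_ge0 f_density.
Let q_ge0 x := density_ge0 (q_density x).

Lemma mh_acc_ge0 x y : 0 <= mh_acc f q x y.
Proof.
rewrite /mh_acc; case: ifPn => // fq_neq0; rewrite le_min ler01 /=.
by rewrite divr_ge0 ?mulr_ge0.
Qed.

Lemma mh_acc_le1 x y : mh_acc f q x y <= 1.
Proof. by rewrite /mh_acc; case: ifPn => // _; rewrite ge_min lexx. Qed.

Lemma mh_kernel_ge0 x y : 0 <= mh_kernel x y.
Proof. by rewrite mulr_ge0 ?mh_acc_ge0. Qed.

Lemma mh_kernel_le x y : mh_kernel x y <= q x y.
Proof. by rewrite ler_piMl ?mh_acc_le1. Qed.

Lemma mh_kernel_minorized x y : delta * f y <= mh_kernel x y.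
Proof.
rewrite /mh_kernel /mh_acc; case: ifPn => [_|fq_neq0]; first by rewrite mul1r.
have fx_gt0 : 0 < f x.
  by rewrite lt0r f_ge0 andbT; apply: contraNneq fq_neq0 => ->; rewrite mul0r.
have qxy_gt0 : 0 < q x y.
  by rewrite lt0r q_ge0 andbT; apply: contraNneq fq_neq0 => ->; rewrite mulr0.
have -> : Num.min 1 (f y * q y x / (f x * q x y)) * q x y =
    Num.min (q x y) (f y * q y x / f x).
  rewrite minr_pMl ?(ltW qxy_gt0) // mul1r; congr Num.min; field.
  by rewrite !gt_eqF.
rewrite le_min q_minorized /= ler_pdivlMr //.
by have := q_minorized y x; have := f_ge0 y; nra.
Qed.

Lemma mh_kernel_reversible x y : f x * mh_kernel x y = f y * mh_kernel y x.
Proof.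
rewrite /mh_kernel /mh_acc.
have [A|A] := eqVneq (f x * q x y) 0; have [B|B] := eqVneq (f y * q y x) 0.
- by rewrite !mul1r A B.
- by rewrite mul1r A mul0r (min_r ler01) mul0r mulr0.
- by rewrite mul1r B mul0r (min_r ler01) mul0r mulr0.
- have fq_gt0 u v : f u * q u v != 0 -> 0 < f u * q u v.
    by move=> fq_neq0; rewrite lt0r fq_neq0 mulr_ge0.
  rewrite mulrCA mulrC mulr_min1_div ?fq_gt0 //.
  by rewrite [in RHS]mulrCA [in RHS]mulrC mulr_min1_div ?fq_gt0 // minC.
Qed.

Lemma measurable_mh_kernel : measurable_fun setT (fun z : X * X => mh_kernel z.1 z.2).
Proof.
have mf : measurable_fun setT f := measurable_density f_density.
have mfq1 : measurable_fun setT (fun z : X * X => f z.1 * q z.1 z.2).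
  by apply: measurable_funM => //; exact: measurableT_comp mf measurable_fst.
have mfq2 : measurable_fun setT (fun z : X * X => f z.2 * q z.2 z.1).
  apply: measurable_funM; first exact: measurableT_comp mf measurable_snd.
  exact: measurableT_comp mq (measurable_fun_pair measurable_snd measurable_fst).
apply: measurable_funM => //; apply: measurable_fun_ifT.
- exact: (measurable_fun_eqr mfq1).
- exact: measurable_cst.
- apply: measurable_minr; first exact: measurable_cst.
  by apply: measurable_funM => //; exact: measurableT_comp (@measurable_inv R) mfq1.
Qed.

Lemma integrable_mh_kernel x : lam.-integrable setT (EFin \o mh_kernel x).
Proof.
apply: integrable_le_real (density_integrable (q_density x)) _.
  exact: measurableT_comp measurable_mh_kernel (pair1_measurable x).
by move=> y; rewrite ger0_norm ?mh_kernel_ge0 ?mh_kernel_le.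
Qed.

Lemma mh_kernel_mass_le1 x : \int[lam]_y mh_kernel x y <= 1.
Proof.
rewrite -(density_Rintegral (q_density x)); apply: le_Rintegral => //.
- exact: integrable_mh_kernel.
- exact: density_integrable.
- by move=> y _; exact: mh_kernel_le.
Qed.

Lemma mh_density_succ p0 n :
  mh_density lam f q p0 n.+1 = kernel_step lam mh_kernel (mh_density lam f q p0 n).
Proof.
apply/funext => y; rewrite /= /kernel_step; congr (_ + _).
by apply: eq_Rintegral => x _; rewrite mulrA.
Qed.

Lemma mh_density_rel_dev p0 r : sigma_finite setT lam -> 0 <= delta ->
  is_density lam p0 -> rel_dev_le f p0 r -> forall n,
  is_density lam (mh_density lam f q p0 n) /\
  rel_dev_le f (mh_density lam f q p0 n) (r * (1 - delta) ^+ n).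
Proof.
move=> lam_sigma delta_ge0 p0_density p0r; elim=> [|n [pn_density pnr]].
  by split => // x; rewrite expr0 mulr1.
rewrite mh_density_succ exprSr mulrA.
apply: kernel_step_density pn_density pnr => //.
- exact: measurable_mh_kernel.
- exact: mh_kernel_ge0.
- exact: integrable_mh_kernel.
- exact: mh_kernel_mass_le1.
- exact: mh_kernel_reversible.
- exact: mh_kernel_minorized.
Qed.

End MetropolisHastings.

Theorem theorem1 (d : measure_display) (X : measurableType d) (R : realType)
  (lam : {measure set X -> \bar R}) (f : X -> R) (q : X -> X -> R)
  (p0 : X -> R) (delta r : R) :
  sigma_finite setT lam ->
  is_density lam f ->
  (forall x, is_density lam (q x)) ->
  measurable_fun setT (fun xy : X * X => q xy.1 xy.2) ->
  is_density lam p0 ->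
  0 < delta < 1 ->
  (forall x y, delta * f y <= q x y) ->
  sup_ratio_dev p0 f = r%:E -> 0 < r ->
  let nu := 1 - delta in
  let p := mh_density lam f q p0 in
  forall a : R, 1 < a ->
    (forall n : nat,
      (Dalpha lam a (p n) f
         <= (1 / (a * (1 - a)) * (1 - (r * nu ^+ n + 1) `^ a))%:E)%E /\
      (Ralpha lam a (p n) f <= (a / (a - 1) * (r * nu ^+ n))%:E)%E /\
      (Talpha lam a (p n) f
         <= (1 / (a - 1) * ((r * nu ^+ n + 1) `^ a - 1))%:E)%E) /\
    (fun n => Dalpha lam a (p n) f) @ \oo --> 0%E /\
    (fun n => Ralpha lam a (p n) f) @ \oo --> 0%E /\
    (fun n => Talpha lam a (p n) f) @ \oo --> 0%E.
Proof.
move=> lam_sigma f_density q_density mq p0_density /andP[delta_gt0 delta_lt1]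
  q_minorized sup_r r_gt0 nu p a a_gt1.
pose c n := r * nu ^+ n.
have c_ge0 n : 0 <= c n by rewrite mulr_ge0 ?exprn_ge0 ?subr_ge0 ?ltW.
have p_dev n : is_density lam (p n) /\ rel_dev_le f (p n) (c n).
  exact (mh_density_rel_dev f_density q_density mq q_minorized lam_sigma
    (ltW delta_gt0) p0_density (rel_dev_le_sup_ratio_dev f_density sup_r) n).
have a_gt0 : 0 < a := lt_trans ltr01 a_gt1.
pose m n := fine (Malpha lam a (p n) f).
have Malpha_m n : Malpha lam a (p n) f = (m n)%:E.
  by have [pn pnc] := p_dev n; rewrite fineK // (Malpha_fin_num f_density a_gt0 pn pnc).
have m_le n : m n <= (c n + 1) `^ a.
  by have [pn pnc] := p_dev n; rewrite addrC; exact (fine_Malpha_le f_density a_gt0 pn pnc).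
split.
  move=> n; split; first exact: Dalpha_le a_gt1 (Malpha_m n) (m_le n).
  split; first exact: Ralpha_le a_gt1 (c_ge0 n) (Malpha_m n) (m_le n).
  exact: Talpha_le a_gt1 (Malpha_m n) (m_le n).
have c_cvg0 : c n @[n --> \oo] --> (0 : R).
  rewrite -(mulr0 r); apply: cvgMl_tmp; apply: cvg_expr.
  by rewrite ger0_norm /nu; lra.
have m_cvg1 : m n @[n --> \oo] --> (1 : R).
  apply: (cvg_powR_sandwich c_cvg0); near=> n.
  have c_le1 : c n <= 1 by apply/ltW; near: n; exact: cvgr_lt c_cvg0 _ ltr01.
  have [pn pnc] := p_dev n.
  have m_ge : (1 - c n) `^ a <= m n := fine_Malpha_ge f_density a_gt0 pn pnc c_le1.
  by apply/andP; split; [exact: m_ge | rewrite addrC].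
split; first exact: Dalpha_cvg0 Malpha_m m_cvg1.
split; first exact: Ralpha_cvg0 Malpha_m m_cvg1.
exact: Talpha_cvg0 Malpha_m m_cvg1.
Unshelve. all: by end_near.
Qed.
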